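(* Let $N\ge 1$ be an integer and let $\mathcal S=(\mathbf s^0,\dots,\mathbf s^{M-1})$ be an $(M,1,\mathbb L)$-$N$-CO-SF in which every sequence $\mathbf s^m$ is nonzero. Then $M\le N$. Moreover, this bound is attainable: for every $N\ge1$ there exists an $(N,1,\mathbb L)$-$N$-CO-SF consisting of nonzero sequences.
   Context: All sequences are finite complex sequences. A sequence $\mathbf s=(s_0,\dots,s_{L-1})$ of length $L$ is identified with the function $s:\mathbb Z\to\mathbb C$ given by $s(n)=s_n$ for $0\le n<L$ and $s(n)=0$ otherwise. For sequences $\mathbf s,\mathbf s'$ of lengths $L,L'$ (possibly different), the aperiodic correlation is $R_{\mathbf s,\mathbf s'}(\tau)=\sum_{l=0}^{L-1}s(l)\,\overline{s'(l+\tau)}$ for $\tau\in\mathbb Z$. The energy of $\mathbf s$ is $E_{\mathbf s}=R_{\mathbf s,\mathbf s}(0)$. An $(M,1,\mathbb L)$-$N$-shift cross-orthogonal sequence family ($N$-CO-SF) is an indexed family $(\mathbf s^0,\dots,\mathbf s^{M-1})$ of complex sequences, where $\mathbf s^m$ has length $L^{(m)}$ divisible by $N$, and $\mathbb L$ is the set of distinct values among $L^{(0)},\dots,L^{(M-1)}$, such that for all $0\le m,m'<M$ and all $k\in\mathbb Z$, $R_{\mathbf s^m,\mathbf s^{m'}}(kN)=E_{\mathbf s^m}\,\delta(m-m')\,\delta(k)$, where $\delta$ is the Kronecker delta ($\delta(0)=1$, $\delta(x)=0$ for $x\neq0$). *)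

From HB Require Import structures.
From mathcomp Require Import all_boot all_order all_algebra.
Set Implicit Arguments. Unset Strict Implicit. Unset Printing Implicit Defensive.
Import Order.TTheory GRing.Theory Num.Theory.
Local Open Scope ring_scope.

(* A finite sequence s = (s_0,...,s_{L-1}) is a [seq C]; L = size s.
   Its extension to Z: s(n) = s_n for 0 <= n < L, 0 otherwise. *)
Definition sval (C : numClosedFieldType) (s : seq C) (n : int) : C :=
  match n with Posz k => nth 0 s k | Negz _ => 0 end.

Definition acorr (C : numClosedFieldType) (s s' : seq C) (tau : int) : C :=
  \sum_(l < size s) sval s (Posz l) * (sval s' (Posz l + tau))^*.

Definition energy (C : numClosedFieldType) (s : seq C) : C := acorr s s 0.

(* (M,1,L)-N-shift cross-orthogonal sequence family, indexed by 'I_M.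
   (The set L of lengths is determined by the family.) *)
Definition is_NCOSF (C : numClosedFieldType) (N M : nat) (s : 'I_M -> seq C) : Prop :=
  (forall m, (N %| size (s m))%N) /\
  forall (m m' : 'I_M) (k : int),
    acorr (s m) (s m') (k * (N : int)) =
    energy (s m) * (m == m')%:R * (k == 0)%:R.

Definition nonzero_seq (C : numClosedFieldType) (s : seq C) : bool :=
  has (fun x => x != 0) s.

From Pilot Require Import Defs.
From HB Require Import structures.
From mathcomp Require Import all_boot all_order all_algebra.
Import Order.TTheory GRing.Theory Num.Theory.
Local Open Scope ring_scope.
Set Implicit Arguments. Unset Strict Implicit.

(* Split a sequence s into its N polyphase components (s(r + jN))_j, r < N, and
   let p_s in C^N collect their sums.  Summing R_{s,s'}(kN) over all k gives the
   Hermitian product <p_s, p_{s'}>, so for an N-CO-SF the vectors p_{s^m} are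
   pairwise orthogonal with squared norms E_{s^m} > 0; hence M <= N.  The N unit
   impulses of length N attain the bound. *)

Lemma big_ord_mul_blocks (V : nmodType) (F : nat -> V) (N J : nat) :
  \sum_(l < N * J) F l = \sum_(j < J) \sum_(r < N) F (r + j * N)%N.
Proof.
rewrite -(big_mkord xpredT) mulnC big_nat_mul big_mkord.
apply: eq_bigr => j _.
by rewrite -{1}(add0n (j * N)%N) big_addn mulSn addnK big_mkord.
Qed.

Lemma sum_shift_window (V : nmodType) (h : int -> V) (J j : nat) : (j <= J)%N ->
  (forall n : int, n < 0 -> h n = 0) -> (forall n : int, J%:Z <= n -> h n = 0) ->
  \sum_(i < J + J) h (j%:Z + i%:Z - J%:Z) = \sum_(n < J) h n%:Z.
Proof.
move=> le_jJ h_neg h_ge.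
rewrite -(big_mkord xpredT (fun i : nat => h (j%:Z + i%:Z - J%:Z))).
rewrite (@big_cat_nat _ _ _ (J - j + J)) ?leq0n //=; last first.
  by rewrite leq_add2r leq_subr.
rewrite (@big_cat_nat _ _ _ (J - j)) ?leq0n ?leq_addr //=.
rewrite [X in X + _ + _]big_nat_cond big1 ?add0r; last first.
  move=> i /andP[/andP[_ lt_i] _]; apply: h_neg.
  by rewrite subr_lt0 -PoszD ltz_nat -ltn_subRL.
rewrite [X in _ + X = _]big_nat_cond [X in _ + X = _]big1 ?addr0; last first.
  move=> i /andP[/andP[le_i _] _]; apply: h_ge.
  have le_JJ : (J + J <= j + i)%N by rewrite -{1}(subnKC le_jJ) -addnA leq_add2l.
  have le_J : (J <= j + i)%N by apply: leq_trans le_JJ; rewrite leq_addr.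
  by rewrite -PoszD (subzn le_J) lez_nat leq_subRL.
rewrite -{1}(add0n (J - j)%N) big_addn addKn big_mkord.
apply: eq_bigr => i _; congr h.
by rewrite PoszD -(subzn le_jJ) addrCA subrKC addrK.
Qed.

Lemma leq_unitmx_mul (F : fieldType) (m n : nat) (A : 'M[F]_(m, n)) (B : 'M[F]_(n, m)) :
  A *m B \in unitmx -> (m <= n)%N.
Proof.
move=> AB_unit; rewrite -(mxrank_unit AB_unit).
exact: leq_trans (mxrankM_maxl _ _) (rank_leq_col _).
Qed.

Section CrossOrthogonalFamilies.

Variable C : numClosedFieldType.
Implicit Types s : seq C.

Lemma sval_neg s (x : int) : x < 0 -> Defs.sval s x = 0.
Proof. by case: x. Qed.

Lemma sval_ge_size s (x : int) : (size s)%:Z <= x -> Defs.sval s x = 0.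
Proof. by case: x => //= n; rewrite lez_nat => ?; apply: nth_default. Qed.

Lemma sval_shift_neg s (N r : nat) (n : int) : (r < N)%N -> n < 0 ->
  Defs.sval s (r%:Z + n * N%:Z) = 0.
Proof.
move=> lt_rN; case: n => // k _.
rewrite NegzE mulNr -PoszM sval_neg // subr_lt0 ltz_nat.
by apply: leq_trans lt_rN _; rewrite mulSn leq_addr.
Qed.

Lemma sval_shift_ge s (N J r : nat) (n : int) : (size s <= N * J)%N -> J%:Z <= n ->
  Defs.sval s (r%:Z + n * N%:Z) = 0.
Proof.
move=> size_s; case: n => // k; rewrite lez_nat => le_Jk.
rewrite -PoszM -PoszD sval_ge_size // lez_nat.
apply: leq_trans size_s _; apply: leq_trans (leq_addl r _).
by rewrite mulnC leq_mul2r le_Jk orbT.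
Qed.

Lemma acorr_widen s s' (tau : int) (L : nat) : (size s <= L)%N ->
  acorr s s' tau = \sum_(l < L) Defs.sval s l * (Defs.sval s' (l%:Z + tau))^*.
Proof.
move=> le_sL; rewrite /acorr.
rewrite (big_ord_widen _ (fun l : nat => Defs.sval s l * (Defs.sval s' (l%:Z + tau))^*) le_sL).
rewrite big_mkcond; apply: eq_bigr => i _.
by case: ltnP => // le_si; rewrite /= nth_default ?mul0r.
Qed.

Lemma energy_neq0 s : nonzero_seq s -> energy s != 0.
Proof.
move=> /(has_nthP 0) [i lt_i s_i].
rewrite /energy /acorr.
under eq_bigr => l _ do rewrite addr0 /= -normCK.
rewrite psumr_eq0; last by move=> l _; rewrite exprn_ge0.
apply/negP => /allP /(_ (Ordinal lt_i) (mem_index_enum _)) /=.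
by rewrite sqrf_eq0 normr_eq0 (negbTE s_i).
Qed.

(* [phase_sum N J s r] is the sum of the r-th polyphase component of s,
   provided size s <= N * J. *)
Definition phase_sum (N J : nat) s (r : nat) : C :=
  \sum_(j < J) Defs.sval s (r + j * N)%N.

(* The shifts kN with -J <= k < J are the only ones at which R_{s,s'} can be
   nonzero, so the left-hand side is the sum over all k. *)
Lemma sum_acorr_window (N J : nat) s s' :
  (size s <= N * J)%N -> (size s' <= N * J)%N ->
  \sum_(i < J + J) acorr s s' ((i%:Z - J%:Z) * N%:Z)
  = \sum_(r < N) phase_sum N J s r * (phase_sum N J s' r)^*.
Proof.
move=> size_s size_s'.
under eq_bigr => i _ do rewrite (acorr_widen s' _ size_s) (big_ord_mul_blocks
  (fun l => Defs.sval s l * (Defs.sval s' (l%:Z + (i%:Z - J%:Z) * N%:Z))^*)).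
rewrite exchange_big /=.
under eq_bigr => j _ do rewrite exchange_big /=.
rewrite exchange_big /=; apply: eq_bigr => r _.
rewrite /phase_sum big_distrl /=; apply: eq_bigr => j _.
rewrite -big_distrr /= rmorph_sum; congr (_ * _).
have shiftE (i : nat) : (r + j * N)%N%:Z + (i%:Z - J%:Z) * N%:Z
                        = r%:Z + (j%:Z + i%:Z - J%:Z) * N%:Z.
  by rewrite PoszD PoszM -addrA -mulrDl addrA.
under eq_bigr => i _ do rewrite shiftE.
rewrite (@sum_shift_window _ (fun n => (Defs.sval s' (r%:Z + n * N%:Z))^*) J j).
- by apply: eq_bigr => n _; rewrite -PoszM -PoszD.
- exact: ltnW (ltn_ord j).
- by move=> n n_lt0; rewrite sval_shift_neg ?conjC0.
- by move=> n le_Jn; rewrite (@sval_shift_ge s' N J) ?conjC0.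
Qed.

Lemma NCOSF_phase_sums_orthogonal (N M J : nat) (s : 'I_M -> seq C) :
  (0 < J)%N -> is_NCOSF N s -> (forall m, size (s m) <= N * J)%N ->
  forall m m' : 'I_M,
  \sum_(r < N) phase_sum N J (s m) r * (phase_sum N J (s m') r)^*
  = energy (s m) * (m == m')%:R.
Proof.
move=> J_gt0 [_ s_CO] size_s m m'.
have lt_J : (J < J + J)%N by rewrite -{1}(addn0 J) ltn_add2l.
rewrite -sum_acorr_window ?size_s //.
under eq_bigr => i _ do rewrite s_CO.
rewrite (bigD1 (Ordinal lt_J)) //= subrr eqxx mulr1 big1 ?addr0 // => i ne_iJ.
suff /negbTE -> : i%:Z - J%:Z != 0 by rewrite mulr0.
by rewrite subr_eq0 eqz_nat; apply: contra ne_iJ => /eqP iJ; apply/eqP/val_inj.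
Qed.

Lemma NCOSF_card_le (N M : nat) (s : 'I_M -> seq C) :
  (0 < N)%N -> is_NCOSF N s -> (forall m, nonzero_seq (s m)) -> (M <= N)%N.
Proof.
move=> N_gt0 s_NCOSF s_nz.
pose J := (\max_(m < M) size (s m)).+1.
have size_s m : (size (s m) <= N * J)%N.
  apply: leq_trans (leq_pmull _ N_gt0).
  exact: leq_trans (leq_bigmax m) (leqnSn _).
pose P : 'M[C]_(M, N) := \matrix_(m, r) phase_sum N J (s m) r.
apply: (@leq_unitmx_mul _ _ _ P (map_mx Num.conj P)^T).
have -> : P *m (map_mx Num.conj P)^T = diag_mx (\row_m energy (s m)).
  apply/matrixP => m m'; rewrite !mxE.
  under eq_bigr => r _ do rewrite !mxE.
  by rewrite NCOSF_phase_sums_orthogonal // mulr_natr.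
rewrite unitmxE det_diag unitr_prod // => m _.
by rewrite mxE unitfE energy_neq0.
Qed.

Definition delta_seq (N m : nat) : seq C := mkseq (fun i => (i == m)%:R) N.

Lemma acorr_delta_seq (N m : nat) s (tau : int) : (m < N)%N ->
  acorr (delta_seq N m) s tau = (Defs.sval s (m%:Z + tau))^*.
Proof.
move=> lt_mN; rewrite /acorr size_mkseq (bigD1 (Ordinal lt_mN)) //= big1.
  by rewrite nth_mkseq // eqxx mul1r addr0.
move=> i ne_im; have /negbTE ne_im_nat : (i : nat) != m by [].
by rewrite nth_mkseq // ne_im_nat mul0r.
Qed.

Lemma sval_delta_seq_shift (N : nat) (m m' : 'I_N) (k : int) :
  Defs.sval (delta_seq N m') (m%:Z + k * N%:Z) = ((m == m') && (k == 0))%:R.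
Proof.
case: k => [[|k]|k].
- by rewrite mul0r addr0 /= nth_mkseq // andbT.
- by rewrite (@sval_shift_ge _ N 1) ?size_mkseq ?muln1 // andbF.
- by rewrite sval_shift_neg // andbF.
Qed.

Lemma delta_family_NCOSF (N : nat) : is_NCOSF N (fun m : 'I_N => delta_seq N m).
Proof.
have acorrE (m m' : 'I_N) (k : int) :
    acorr (delta_seq N m) (delta_seq N m') (k * N%:Z) = ((m == m') && (k == 0))%:R.
  by rewrite acorr_delta_seq // sval_delta_seq_shift conjC_nat.
split=> [m | m m' k]; first by rewrite size_mkseq dvdnn.
have -> : energy (delta_seq N m) = 1 by rewrite /energy -(mul0r N%:Z) acorrE eqxx.
by rewrite acorrE mul1r -natrM mulnb.
Qed.

Lemma delta_seq_nonzero (N m : nat) : (m < N)%N -> nonzero_seq (delta_seq N m).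
Proof.
move=> lt_mN; apply/(has_nthP 0); exists m; first by rewrite size_mkseq.
by rewrite nth_mkseq // eqxx oner_neq0.
Qed.

End CrossOrthogonalFamilies.

Unset Implicit Arguments. Set Strict Implicit.

Theorem theorem1 (C : numClosedFieldType) (N : nat) (hN : (1 <= N)%N) :
  (forall (M : nat) (s : 'I_M -> seq C),
      is_NCOSF N s -> (forall m, nonzero_seq (s m)) -> (M <= N)%N) /\
  (exists s : 'I_N -> seq C,
      is_NCOSF N s /\ forall m, nonzero_seq (s m)).
Proof.
split; first by move=> M s; apply: NCOSF_card_le.
exists (fun m : 'I_N => delta_seq C N m); split; first exact: delta_family_NCOSF.
by move=> m; apply: delta_seq_nonzero.
Qed.
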